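(* Let $n\geq 2$, $m>0$, and let $\tau$ be a maximal simplex of $\Delta_m^{n,2}=\mathrm{VR}(\{0,\ldots,m\}^n;2)$. Writing $V=\{0,\ldots,m\}^n$, one of the following holds: (i) $\tau=N[x]\cap V$ for some $x\in\mathbb{Z}^n$; (ii) $\tau=\{x,x^{i_0},x^{j_0},x^{i_0,j_0}\}\cap V$ for some $x\in\mathbb{Z}^n$ and $i_0,j_0\in[n]^{\pm}$; (iii) $\tau=\{x,x^{i_0,j_0},x^{j_0,k_0},x^{i_0,k_0}\}\cap V$ for some $x\in\mathbb{Z}^n$ and $i_0,j_0,k_0\in[n]^{\pm}$.
   Context: $\mathbb{Z}^n$ carries the Manhattan metric $d(x,y)=\sum_{i=1}^n|x_i-y_i|$; $\mathrm{VR}(X;r)$ is the simplicial complex on $X$ whose simplices are finite subsets of diameter at most $r$. Write $[n]=\{1,\ldots,n\}$, $[-n]=\{-1,\ldots,-n\}$, $[n]^{\pm}=[n]\cup[-n]$. For $x\in\mathbb{Z}^n$ and $i_1,\ldots,i_k\in[n]^{\pm}$ with pairwise distinct absolute values, $x^{i_1,\ldots,i_k}$ is obtained from $x$ by adding $1$ to coordinate $j$ for each $j\in\{i_1,\ldots,i_k\}\cap[n]$ and subtracting $1$ from coordinate $j$ for each $j$ with $-j\in\{i_1,\ldots,i_k\}$. $N[x]=\{y\in\mathbb{Z}^n: d(x,y)\leq 1\}$. *)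

From HB Require Import structures.
From mathcomp Require Import all_boot all_order all_algebra.
Set Implicit Arguments. Unset Strict Implicit. Unset Printing Implicit Defensive.
Import Order.TTheory GRing.Theory Num.Theory.

Notation pt n := {ffun 'I_n -> int}.

Definition mdist (n : nat) (x y : pt n) : nat :=
  \sum_(i < n) absz (x i - y i)%R.

Definition inV (n m : nat) (x : pt n) : Prop :=
  forall i : 'I_n, (0 <= x i)%R /\ (x i <= m%:Z)%R.

(* A simplex of VR(V;2): a subset of V (automatically finite) of diameter <= 2.
   Subsets of Z^n are represented as predicates pt n -> Prop. *)
Definition VR_simplex (n m : nat) (tau : pt n -> Prop) : Prop :=
  (forall x, tau x -> inV m x) /\
  (forall x y, tau x -> tau y -> mdist x y <= 2).

Definition maximal_simplex (n m : nat) (tau : pt n -> Prop) : Prop :=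
  VR_simplex m tau /\
  (forall sigma : pt n -> Prop, VR_simplex m sigma ->
     (forall x, tau x -> sigma x) -> forall x, sigma x -> tau x).

(* Signed index in [n]^{+-}: (j, true) stands for j+1, (j, false) for -(j+1).
   The absolute value is the first component. *)
Definition sidx (n : nat) := ('I_n * bool)%type.

(* x^{i}: add 1 (sign +) or subtract 1 (sign -) at coordinate |i|.
   For indices with distinct absolute values, x^{i1,...,ik} is the iterate. *)
Definition shift (n : nat) (x : pt n) (i : sidx n) : pt n :=
  [ffun j => if j == i.1 then (x j + (if i.2 then 1 else -1))%R else x j].

(* If two points of tau differ by 2 in one coordinate, they agree in all others
   and every point of tau lies within distance 1 of their midpoint: tau is a ball.
   Otherwise tau lies in a unit cube with a corner p in tau, on whose vertices the
   Manhattan metric is the Hamming distance between subsets of coordinates.  The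
   subsets coming from tau contain the empty set and have diameter at most 2, so
   they have at most two elements and any two 2-element ones meet.  Hence the pairs
   are absent (a ball around p), form a star (a ball around a neighbour of p, or
   the square spanned by a single pair) or form a triangle {ab, bc, ac}.
   Maximality of tau then makes it the whole configuration, intersected with V. *)

From mathcomp Require Import all_boot all_order all_algebra.
From mathcomp Require Import zify.
From Stdlib Require Import Classical.
Set Implicit Arguments. Unset Strict Implicit. Unset Printing Implicit Defensive.
Import GRing.Theory.

Section HammingDistance.
Variable T : finType.
Implicit Types (A B S : {set T}) (a b c x y : T).

Definition hdist A B : nat := #|(A :\: B) :|: (B :\: A)|.

Lemma hdistC A B : hdist A B = hdist B A.
Proof. by rewrite /hdist setUC. Qed.

Lemma hdist0s A : hdist set0 A = #|A|.
Proof. by rewrite /hdist set0D setD0 set0U. Qed.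

Lemma hdist_card A B : hdist A B + 2 * #|A :&: B| = #|A| + #|B|.
Proof.
have disjD : (A :\: B) :&: (B :\: A) = set0.
  by apply/setP => x; rewrite !inE; case: (x \in A); case: (x \in B).
have := cardsUI (A :\: B) (B :\: A); rewrite disjD cards0 addn0 /hdist => ->.
rewrite !cardsD [B :&: A]setIC.
have := subset_leq_card (subsetIl A B); have := subset_leq_card (subsetIr A B).
lia.
Qed.

Lemma hdist_le_card_sub S A B : A \subset S -> B \subset S -> hdist A B <= #|S|.
Proof.
by move=> AS BS; apply: subset_leq_card; rewrite subUset !(subset_trans (subsetDl _ _)).
Qed.

Lemma set2_of_card A x y : x \in A -> y \in A -> x != y -> #|A| <= 2 -> A = [set x; y].
Proof.
move=> xA yA xy A2; apply/esym/eqP; rewrite eqEcard cards2 xy A2 andbT.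
by apply/subsetP => z; rewrite !inE => /orP[]/eqP->.
Qed.

Lemma subset_set2 A a b :
  A \subset [set a; b] -> A \in [:: set0; [set a]; [set b]; [set a; b]].
Proof.
move=> /subsetP Aab; rewrite !inE; apply/or4P.
have memA z : (z \in A) = ((z == a) && (a \in A)) || ((z == b) && (b \in A)).
  apply/idP/idP => [zA | /orP[]/andP[/eqP-> //]].
  have := Aab z zA; rewrite !inE => /orP[]/eqP zE; move: zA; rewrite zE => ->;
    by rewrite eqxx ?orbT.
case aA: (a \in A); case bA: (b \in A); [apply: Or44|apply: Or42|apply: Or43|apply: Or41];
  by apply/eqP/setP => z; rewrite memA aA bA !inE ?andbT ?andbF ?orbF.
Qed.

Lemma hdist_subsets2 a b :
  {in [:: set0; [set a]; [set b]; [set a; b]] &, forall A B, hdist A B <= 2}.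
Proof.
have sub X : X \in [:: set0; [set a]; [set b]; [set a; b]] -> X \subset [set a; b].
  by rewrite !inE => /or4P[]/eqP->; rewrite ?sub0set ?sub1set ?subxx ?inE ?eqxx ?orbT.
move=> A B /sub As /sub Bs; apply: leq_trans (hdist_le_card_sub As Bs) _.
by rewrite cards2; case: (a != b).
Qed.

Lemma hdist_pairs3 a b c : [/\ a != b, b != c & a != c] ->
  {in [:: set0; [set a; b]; [set b; c]; [set a; c]] &, forall A B, hdist A B <= 2}.
Proof.
move=> [ab bc ac].
(* The symmetric difference has at most 3 elements and, like A and B, even size. *)
have even X : X \in [:: set0; [set a; b]; [set b; c]; [set a; c]] ->
    X \subset [set a; b; c] /\ (#|X| = 0 \/ #|X| = 2).
  rewrite !inE => /or4P[]/eqP->; rewrite ?cards0 ?cards2 ?ab ?bc ?ac ?sub0set; split; auto;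
    by apply/subsetP => z; rewrite !inE => /orP[]/eqP->; rewrite eqxx ?orbT.
have card3 : #|[set a; b; c]| <= 3 by rewrite cardsU cards2 cards1; lia.
move=> A B /even [As cA] /even [Bs cB].
have := hdist_le_card_sub As Bs; have := hdist_card A B; lia.
Qed.

Section Diameter2Families.
Variable F : {set T} -> Prop.
Hypothesis F0 : F set0.
Hypothesis Fdiam : forall A B, F A -> F B -> hdist A B <= 2.

Lemma diam2_card A : F A -> #|A| <= 2.
Proof. by move=> FA; rewrite -hdist0s; apply: Fdiam. Qed.

Lemma diam2_pair_meets A a b : F A -> F [set a; b] -> a != b -> A != set0 ->
  (a \in A) || (b \in A).
Proof.
move=> FA Fab ab; rewrite -card_gt0 => A0.
have : 0 < #|A :&: [set a; b]|.
  by have := hdist_card A [set a; b]; have := Fdiam FA Fab; rewrite cards2 ab; lia.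
rewrite card_gt0 => /set0Pn[z]; rewrite !inE => /andP[zA /orP[]/eqP zE];
  by rewrite -zE zA ?orbT.
Qed.

Lemma diam2_star_or_triangle a b c : [/\ a != b, b != c & a != c] ->
  F [set a; b] -> F [set a; c] ->
  (forall A, F A -> hdist [set a] A <= 1) \/ F [set b; c].
Proof.
move=> [ab bc ac] Fab Fac.
case: (classic (exists2 A, F A & (A != set0) && (a \notin A))) => [[A FA] | star].
  move=> /andP[A0 aA]; right.
  have bA : b \in A by have := diam2_pair_meets FA Fab ab A0; rewrite (negbTE aA).
  have cA : c \in A by have := diam2_pair_meets FA Fac ac A0; rewrite (negbTE aA).
  by rewrite -(set2_of_card bA cA bc (diam2_card FA)).
left=> A FA; have [-> | A0] := eqVneq A set0; first by rewrite hdistC hdist0s cards1.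
have aA : a \in A by apply/negPn/negP => aA; apply: star; exists A; rewrite ?A0.
have := hdist_card [set a] A; rewrite (setIidPl _) ?sub1set // cards1.
by have := diam2_card FA; lia.
Qed.

Lemma diam2_triangle a b c : [/\ a != b, b != c & a != c] ->
  F [set a; b] -> F [set b; c] -> F [set a; c] ->
  forall A, F A -> A \in [:: set0; [set a; b]; [set b; c]; [set a; c]].
Proof.
move=> [ab bc ac] Fab Fbc Fac A FA; rewrite !inE.
have [-> // | A0] := eqVneq A set0.
have A2 := diam2_card FA.
have /orP[aA | bA] := diam2_pair_meets FA Fab ab A0.
  have /orP[bA | cA] := diam2_pair_meets FA Fbc bc A0.
    by rewrite (set2_of_card aA bA ab A2) eqxx orbT.
  by rewrite (set2_of_card aA cA ac A2) eqxx !orbT.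
have /orP[aA | cA] := diam2_pair_meets FA Fac ac A0.
  by rewrite (set2_of_card aA bA ab A2) eqxx orbT.
by rewrite (set2_of_card bA cA bc A2) eqxx !orbT.
Qed.

Theorem diam2_family_classification :
  (exists C, forall A, F A -> hdist C A <= 1) \/
  (exists a b, a != b /\
     forall A, F A -> A \in [:: set0; [set a]; [set b]; [set a; b]]) \/
  (exists a b c, [/\ a != b, b != c & a != c] /\
     forall A, F A -> A \in [:: set0; [set a; b]; [set b; c]; [set a; c]]).
Proof.
case: (classic (exists2 P, F P & #|P| = 2)) => [[P FP] | nopair]; last first.
  left; exists set0 => A FA; rewrite hdist0s.
  have := diam2_card FA; have : #|A| <> 2 by move=> A2; apply: nopair; exists A.
  lia.
move=> /eqP/cards2P[a [b [ab defP]]]; rewrite {P}defP in FP.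
case: (classic (exists A c, [/\ F A, c \in A & c \notin [set a; b]]))
  => [[A [c [FA cA]]] | inab]; last first.
  right; left; exists a, b; split=> // A FA; apply: subset_set2.
  by apply/subsetP => c cA; apply/negPn/negP => cab; apply: inab; exists A, c.
rewrite !inE negb_or => /andP[ca cb].
suff [x [y [Fxy Fxc xyc]]] : exists x y,
    [/\ F [set x; y], F [set x; c] & [/\ x != y, y != c & x != c]].
  have [star | Fyc] := diam2_star_or_triangle xyc Fxy Fxc; first by left; exists [set x].
  by right; right; exists x, y, c; split=> //; apply: diam2_triangle.
have A0 : A != set0 by apply/set0Pn; exists c.
have A2 := diam2_card FA.
have /orP[aA | bA] := diam2_pair_meets FA FP ab A0.
  exists a, b; rewrite -(set2_of_card aA cA _ A2) 1?eq_sym //.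
  by split=> //; split; rewrite // eq_sym.
exists b, a; rewrite -(set2_of_card bA cA _ A2) 1?eq_sym //.
by split; [rewrite setUC | | split; rewrite // eq_sym].
Qed.

End Diameter2Families.
End HammingDistance.

Section LatticeCube.
Variable n : nat.
Implicit Types (p t u w x y z : pt n) (s : 'I_n -> bool) (A B : {set 'I_n}).

Lemma mdistC x y : mdist x y = mdist y x.
Proof. by apply: eq_bigr => i _; rewrite -abszN opprB. Qed.

Lemma mdistxx x : mdist x x = 0.
Proof. by apply: big1 => i _; rewrite subrr. Qed.

Lemma mdist_triangle x y z : mdist x z <= mdist x y + mdist y z.
Proof.
rewrite /mdist -big_split /=; apply: leq_sum => i _.
by set a := x i; set b := y i; set c := z i; lia.
Qed.

Lemma mdistD1 i x y :
  mdist x y = absz (x i - y i)%R + \sum_(k | k != i) absz (x k - y k)%R.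
Proof. exact: bigD1. Qed.

Lemma absz_le_mdist i x y : absz (x i - y i)%R <= mdist x y.
Proof. by rewrite (mdistD1 i) leq_addr. Qed.

Lemma mdist_agree_off i x y :
  mdist x y <= absz (x i - y i)%R -> forall k, k != i -> x k = y k.
Proof.
rewrite (mdistD1 i) -[X in _ <= X]addn0 leq_add2l leqn0 sum_nat_eq0.
by move=> /forallP agree k ki; move: (agree k); rewrite ki => /eqP; lia.
Qed.

Lemma mdist_midpoint_le1 i t u w :
  (forall k, k != i -> t k = u k) -> t i = (u i + 2)%R ->
  mdist t w <= 2 -> mdist u w <= 2 -> mdist (shift u (i, true)) w <= 1.
Proof.
move=> tu ti.
have offt : \sum_(k | k != i) absz (t k - w k)%R = \sum_(k | k != i) absz (u k - w k)%R.
  by apply: eq_bigr => k ki; rewrite tu.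
have offmid : \sum_(k | k != i) absz (shift u (i, true) k - w k)%R =
              \sum_(k | k != i) absz (u k - w k)%R.
  by apply: eq_bigr => k ki; rewrite ffunE (negbTE ki).
rewrite !(mdistD1 i) offt offmid ffunE eqxx ti /=; lia.
Qed.

Definition sgn (b : bool) : int := if b then 1%R else (-1)%R.

Definition cube_vertex p s A : pt n :=
  [ffun k => if k \in A then (p k + sgn (s k))%R else p k].

Lemma mdist_cube_vertex p s A B :
  mdist (cube_vertex p s A) (cube_vertex p s B) = hdist A B.
Proof.
rewrite /mdist /hdist -sum1_card [RHS]big_mkcond /=; apply: eq_bigr => k _.
rewrite !ffunE !inE /sgn; case: (k \in A); case: (k \in B); case: (s k) => /=; lia.
Qed.

Lemma cube_vertex0 p s : cube_vertex p s set0 = p.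
Proof. by apply/ffunP => k; rewrite ffunE inE. Qed.

Lemma cube_vertex1 p s a : cube_vertex p s [set a] = shift p (a, s a).
Proof. by apply/ffunP => k; rewrite !ffunE inE; case: eqP => [->|]. Qed.

Lemma cube_vertex2 p s a b :
  a != b -> cube_vertex p s [set a; b] = shift (shift p (a, s a)) (b, s b).
Proof.
move=> ab; apply/ffunP => k; rewrite !ffunE !inE /=.
have [-> | kb] := eqVneq k b; first by rewrite eq_sym (negbTE ab).
by rewrite orbF; case: eqP => [->|].
Qed.

Lemma cube_vertex_cover (X : pt n -> Prop) p : X p ->
  (forall t u i, X t -> X u -> absz (t i - u i)%R <= 1) ->
  exists s, forall t, X t -> exists A, t = cube_vertex p s A.
Proof.
move=> Xp spread.
have side_k k : exists b, forall t, X t -> t k = p k \/ t k = (p k + sgn b)%R.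
  case: (classic (exists2 u, X u & u k = (p k + 1)%R)) => [[u Xu uk] | nou].
    exists true => t Xt; have := spread t p k Xt Xp; have := spread t u k Xt Xu.
    by rewrite uk /sgn; lia.
  exists false => t Xt; have : t k <> (p k + 1)%R by move=> tk; apply: nou; exists t.
  by have := spread t p k Xt Xp; rewrite /sgn; lia.
have [s side] := fin_all_exists side_k.
exists s => t Xt; exists [set k | t k != p k]; apply/ffunP => k.
rewrite ffunE inE; case: (side k t Xt) => ->; first by rewrite eqxx.
by rewrite ifT // /sgn; case: (s k); lia.
Qed.

End LatticeCube.

Section MaximalSimplex.
Variables (n m : nat) (tau : pt n -> Prop).
Hypothesis maxtau : maximal_simplex m tau.

Lemma maximal_simplex_diam t u : tau t -> tau u -> mdist t u <= 2.
Proof. by case: maxtau => -[_ diam] _; apply: diam. Qed.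

Lemma maximal_simplexE (P : pt n -> Prop) :
  (forall y z, P y -> P z -> mdist y z <= 2) -> (forall t, tau t -> P t) ->
  forall y, tau y <-> P y /\ inV m y.
Proof.
case: maxtau => -[tauV _] maximal diamP tauP y; split=> [tauy | Pyy].
  by split; [apply: tauP | apply: tauV].
apply: (maximal (fun y => P y /\ inV m y)) => //.
  by split=> [x [] | x z [Px _] [Pz _]]; last exact: diamP.
by move=> x taux; split; [apply: tauP | apply: tauV].
Qed.

Lemma maximal_simplex_nonempty : exists p, tau p.
Proof.
apply: NNPP => empty; set o : pt n := [ffun=> 0%R].
suff tauo : tau o by apply: empty; exists o.
case: maxtau => _ maximal; apply: (maximal (fun y => y = o)) => //.
  split=> [x -> i | x y -> ->]; last by rewrite mdistxx.
  by rewrite ffunE.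
by move=> x taux; case: empty; exists x.
Qed.

Lemma maximal_simplex_ball q : (forall t, tau t -> mdist q t <= 1) ->
  forall y, tau y <-> mdist q y <= 1 /\ inV m y.
Proof.
apply: maximal_simplexE => y z qy qz.
by apply: leq_trans (mdist_triangle y q z) _; rewrite mdistC; apply: leq_add qy qz.
Qed.

Lemma maximal_simplex_cube p s (L : seq {set 'I_n}) :
  (forall t, tau t -> exists A, t = cube_vertex p s A) ->
  (forall A, tau (cube_vertex p s A) -> A \in L) ->
  {in L &, forall A B, hdist A B <= 2} ->
  forall y, tau y <-> y \in map (cube_vertex p s) L /\ inV m y.
Proof.
move=> cover tauL diamL; apply: maximal_simplexE.
  by move=> _ _ /mapP[A LA ->] /mapP[B LB ->]; rewrite mdist_cube_vertex; apply: diamL.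
by move=> t /[dup] /cover[A ->] /tauL LA; apply: map_f.
Qed.

Lemma maximal_simplex_width2 t u i : tau t -> tau u -> t i = (u i + 2)%R ->
  forall w, tau w -> mdist (shift u (i, true)) w <= 1.
Proof.
move=> taut tauu ti w tauw; apply: (mdist_midpoint_le1 _ ti).
- apply: mdist_agree_off; have := maximal_simplex_diam taut tauu; rewrite ti; lia.
- exact: maximal_simplex_diam.
- exact: maximal_simplex_diam.
Qed.

Lemma maximal_simplex_spread :
  ~ (exists t u i, [/\ tau t, tau u & t i = (u i + 2)%R]) ->
  forall t u i, tau t -> tau u -> absz (t i - u i)%R <= 1.
Proof.
move=> no2 t u i taut tauu.
have tu2 : t i <> (u i + 2)%R by move=> ti; apply: no2; exists t, u, i.
have ut2 : u i <> (t i + 2)%R by move=> ui; apply: no2; exists u, t, i.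
have := leq_trans (absz_le_mdist i t u) (maximal_simplex_diam taut tauu); lia.
Qed.

End MaximalSimplex.

Theorem lemma4p2 (n m : nat) (tau : pt n -> Prop) :
  (2 <= n)%N -> (0 < m)%N -> maximal_simplex m tau ->
  (exists x : pt n, forall y : pt n,
      tau y <-> ((mdist x y <= 1)%N /\ inV m y))
  \/
  (exists (x : pt n) (i0 j0 : sidx n), i0.1 != j0.1 /\
     forall y : pt n, tau y <->
       (y \in [:: x; shift x i0; shift x j0; shift (shift x i0) j0]) /\ inV m y)
  \/
  (exists (x : pt n) (i0 j0 k0 : sidx n),
     [/\ i0.1 != j0.1, j0.1 != k0.1 & i0.1 != k0.1] /\
     forall y : pt n, tau y <->
       (y \in [:: x; shift (shift x i0) j0; shift (shift x j0) k0;
                  shift (shift x i0) k0]) /\ inV m y).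
Proof.
move=> _ _ maxtau; have [p taup] := maximal_simplex_nonempty maxtau.
case: (classic (exists t u i, [/\ tau t, tau u & t i = (u i + 2)%R]))
  => [[t [u [i [taut tauu ti]]]] | no2].
  left; exists (shift u (i, true)); apply: (maximal_simplex_ball maxtau).
  by move=> w; apply: (maximal_simplex_width2 maxtau taut tauu ti).
have [s cover] := cube_vertex_cover taup (maximal_simplex_spread maxtau no2).
pose F A := tau (cube_vertex p s A).
have F0 : F set0 by rewrite /F cube_vertex0.
have Fdiam A B : F A -> F B -> hdist A B <= 2.
  by rewrite -(mdist_cube_vertex p s); apply: (maximal_simplex_diam maxtau).
have [[C ball] | [[a [b [ab sub]]] | [a [b [c [abc sub]]]]]] :=
  diam2_family_classification F0 Fdiam.
- left; exists (cube_vertex p s C); apply: (maximal_simplex_ball maxtau) => t.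
  by move=> /[dup] /cover[A ->] /ball; rewrite mdist_cube_vertex.
- right; left; exists p, (a, s a), (b, s b); split=> //.
  have := maximal_simplex_cube maxtau cover sub (@hdist_subsets2 _ a b).
  by rewrite /= cube_vertex0 !cube_vertex1 cube_vertex2.
- right; right; exists p, (a, s a), (b, s b), (c, s c); split=> //.
  have := maximal_simplex_cube maxtau cover sub (hdist_pairs3 abc).
  by case: abc => ab bc ac; rewrite /= cube_vertex0 !cube_vertex2.
Qed.
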